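(* Let $A=(a_{ij})$ be a real symmetric $n\times n$ matrix with positive diagonal entries, and suppose there is $\gamma>0$ such that $a_{ii}a_{jj}\ge\gamma^2a_{ij}^2$ for all $i\ne j$. Then every eigenvalue of $A$ lies in $\bigcup_{i=1}^n B\big(a_{ii},a_{ii}(n-1)/\gamma\big)$, where $B(c,r)$ denotes the closed ball (interval) of center $c$ and radius $r$. *)

From mathcomp Require Import all_boot all_order all_algebra.
Set Implicit Arguments. Unset Strict Implicit. Unset Printing Implicit Defensive.

(** Let [v] be a (left) eigenvector for [lambda] and choose [i] maximising the
    weight [A j j * v_j ^ 2]; then [v_i != 0].  Comparing weights with the
    hypothesis [gamma^2 A_ji^2 <= A_ii A_jj] gives [|v_j A_ji| <= |v_i| A_ii / gamma]
    for every [j != i], and the [i]-th coordinate of the eigen-equation,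
    [(lambda - A_ii) v_i = \sum_(j != i) v_j A_ji], sums [n - 1] such terms. *)

From mathcomp Require Import all_boot all_order all_algebra.
From mathcomp Require Import ring.

Set Implicit Arguments.
Unset Strict Implicit.
Unset Printing Implicit Defensive.

Import Order.TTheory GRing.Theory Num.Theory.
Local Open Scope ring_scope.

Lemma ler_mul_of_sqr_bounds (R : realDomainType) (x y z a b g : R) :
  0 <= x -> 0 <= z -> 0 <= a ->
  g ^+ 2 * y ^+ 2 <= a * b -> b * x ^+ 2 <= a * z ^+ 2 -> x * y * g <= a * z.
Proof.
move=> x_ge0 z_ge0 a_ge0 hy hx.
have hsqr : (x * y * g) ^+ 2 <= (a * z) ^+ 2.
  have -> : (x * y * g) ^+ 2 = x ^+ 2 * (g ^+ 2 * y ^+ 2) by ring.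
  apply: (le_trans (y := x ^+ 2 * (a * b))); first by rewrite ler_wpM2l ?sqr_ge0.
  have -> : x ^+ 2 * (a * b) = a * (b * x ^+ 2) by ring.
  have -> : (a * z) ^+ 2 = a * (a * z ^+ 2) by ring.
  exact: ler_wpM2l.
have [xyg_le0 | xyg_gt0] := lerP (x * y * g) 0.
  exact/(le_trans xyg_le0)/mulr_ge0.
by rewrite -(ler_pXn2r (n := 2)) // nnegrE; [exact: ltW | exact: mulr_ge0].
Qed.

Lemma rV_eigen_coord (R : comPzRingType) (n : nat) (A : 'M[R]_n) (v : 'rV[R]_n)
    (lambda : R) (i : 'I_n) :
  v *m A = lambda *: v ->
  (lambda - A i i) * v 0 i = \sum_(j | j != i) v 0 j * A j i.
Proof.
move=> /(congr1 (fun M : 'rV[R]_n => M 0 i)); rewrite !mxE => hi.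
by rewrite mulrBl -hi (bigD1 i) //= (mulrC (A i i)) addrAC subrr add0r.
Qed.

Section WeightedGershgorin.

Variables (R : realFieldType) (n : nat) (A : 'M[R]_n) (gamma : R).
Hypothesis hdiag : forall i : 'I_n, 0 < A i i.
Hypothesis hgamma : 0 < gamma.
Hypothesis hoff : forall i j : 'I_n, i != j -> gamma ^+ 2 * A i j ^+ 2 <= A i i * A j j.

Definition diag_weight (v : 'rV[R]_n) (j : 'I_n) : R := A j j * v 0 j ^+ 2.

Lemma diag_weight_max_neq0 (v : 'rV[R]_n) (i : 'I_n) :
  v != 0 -> (forall j, diag_weight v j <= diag_weight v i) -> v 0 i != 0.
Proof.
case/rV0Pn=> k vk_neq0 imax; have := imax k; rewrite /diag_weight.
apply: contraTneq => ->; rewrite expr0n mulr0 -ltNge.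
by rewrite mulr_gt0 // exprn_even_gt0.
Qed.

Variables (v : 'rV[R]_n) (i : 'I_n).
Hypothesis imax : forall j, diag_weight v j <= diag_weight v i.

Lemma offdiag_term_le (j : 'I_n) :
  j != i -> `|v 0 j * A j i| <= `|v 0 i| * A i i / gamma.
Proof.
move=> ji; rewrite ler_pdivlMr // normrM [leRHS]mulrC.
apply: (ler_mul_of_sqr_bounds (b := A j j) (normr_ge0 _) (normr_ge0 _) (ltW (hdiag i))).
  by rewrite real_normK ?num_real // [leRHS]mulrC; exact: hoff.
by rewrite !real_normK ?num_real //; have := imax j; rewrite /diag_weight mulrC.
Qed.

Lemma eigenvalue_dist_diag_le (lambda : R) :
  v *m A = lambda *: v -> v 0 i != 0 ->
  `|lambda - A i i| <= A i i * (n%:R - 1) / gamma.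
Proof.
move=> hv vi_neq0; have vi_gt0 : 0 < `|v 0 i| by rewrite normr_gt0.
have hsum : `|lambda - A i i| * `|v 0 i| <= (`|v 0 i| * A i i / gamma) *+ #|predC1 i|.
  rewrite -normrM rV_eigen_coord // -sumr_const.
  apply: le_trans (ler_norm_sum _ _ _) _.
  by apply: ler_sum => j; exact: offdiag_term_le.
have n_gt0 : (0 < n)%N := leq_ltn_trans (leq0n i) (ltn_ord i).
rewrite cardC1 card_ord -subn1 -mulr_natr natrB // in hsum.
rewrite -(ler_pM2r vi_gt0).
suff -> : A i i * (n%:R - 1) / gamma * `|v 0 i| = `|v 0 i| * A i i / gamma * (n%:R - 1) by [].
by ring.
Qed.

End WeightedGershgorin.

Theorem theorem6p4 (R : realFieldType) (n : nat) (A : 'M[R]_n) (gamma : R)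
  (hsym : A^T = A)
  (hdiag : forall i : 'I_n, 0 < A i i)
  (hgamma : 0 < gamma)
  (hoff : forall i j : 'I_n, i != j -> gamma ^+ 2 * A i j ^+ 2 <= A i i * A j j)
  (lambda : R) (hev : eigenvalue A lambda) :
  exists i : 'I_n, `|lambda - A i i| <= A i i * (n%:R - 1) / gamma.
Proof.
have [v hv v_neq0] := eigenvalueP hev.
have [k _] := rV0Pn v v_neq0.
have [i _ imax] := arg_maxP (diag_weight A v) (P := xpredT) (i0 := k) isT.
have {}imax j : diag_weight A v j <= diag_weight A v i := imax j isT.
exists i; apply: eigenvalue_dist_diag_le => //.
exact: diag_weight_max_neq0 imax.
Qed.
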